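(* For $\lambda\in\{1,2\}$, the $\Gamma_2$-contractions $(M_{s_1},M_{s_2})|_{\mathbb A^{(\lambda)}_{\rm triv}(\mathbb D^2)}$ and $(M_{s_1},M_{s_2})|_{\mathbb A^{(\lambda)}_{\rm sign}(\mathbb D^2)}$ are not similar, i.e. there is no bounded invertible operator $X:\mathbb A^{(\lambda)}_{\rm triv}(\mathbb D^2)\to\mathbb A^{(\lambda)}_{\rm sign}(\mathbb D^2)$ with $XM_{s_i}=M_{s_i}X$ for $i=1,2$.
   Context: $s_1=z_1+z_2$, $s_2=z_1z_2$; $\Gamma_2=\{(z_1+z_2,z_1z_2):z\in\overline{\mathbb D}^2\}$ and a $\Gamma_2$-contraction is a commuting pair having $\Gamma_2$ as a spectral set. $\mathbb A^{(2)}(\mathbb D^2)$ is the Bergman space of $\mathbb D^2$ (kernel $\prod_i(1-z_i\bar w_i)^{-2}$) and $\mathbb A^{(1)}(\mathbb D^2)=H^2(\mathbb D^2)$ the Hardy space (kernel $\prod_i(1-z_i\bar w_i)^{-1}$). $\mathbb A^{(\lambda)}_{\rm triv}(\mathbb D^2)$ and $\mathbb A^{(\lambda)}_{\rm sign}(\mathbb D^2)$ are the subspaces of symmetric, respectively antisymmetric, functions under $(z_1,z_2)\mapsto(z_2,z_1)$. *)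

From HB Require Import structures.
From mathcomp Require Import all_boot all_order all_algebra.
From mathcomp Require Import complex.
From mathcomp Require Import reals.
Set Implicit Arguments. Unset Strict Implicit. Unset Printing Implicit Defensive.
Import Order.TTheory GRing.Theory Num.Theory.
Local Open Scope ring_scope.

(* Functions on the bidisc D^2 are represented by their Taylor coefficients:
   f(z1,z2) = \sum_{a,b} c a b z1^a z2^b, with c : nat -> nat -> R[i]. *)
Definition coefs (R : realType) := nat -> nat -> R[i].

Definition sqmod (R : realType) (z : R[i]) : R := (complex.Re z) ^+ 2 + (complex.Im z) ^+ 2.

(* ||z1^a z2^b||^2 in A^(lambda)(D^2), the RKHS with kernel
   prod_i (1 - z_i conj(w_i))^(-lambda):  1 / (C(a+l-1,a) C(b+l-1,b)).
   lambda = 1: Hardy space H^2(D^2) (weight 1);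
   lambda = 2: Bergman space (weight 1/((a+1)(b+1))). *)
Definition wt (R : realType) (lam a b : nat) : R :=
  (('C(a + lam - 1, a) * 'C(b + lam - 1, b))%N%:R)^-1.

Definition psum (R : realType) (lam : nat) (c : coefs R) (N : nat) : R :=
  \sum_(a < N) \sum_(b < N) wt R lam a b * sqmod (c a b).

(* ||f||^2 <= M  (norm^2 is the sup of the partial sums) *)
Definition normsq_le (R : realType) (lam : nat) (c : coefs R) (M : R) : Prop :=
  forall N, psum lam c N <= M.

Definition inA (R : realType) (lam : nat) (c : coefs R) : Prop :=
  exists M : R, normsq_le lam c M.

Definition inTriv (R : realType) (lam : nat) (c : coefs R) : Prop :=
  inA lam c /\ forall a b, c a b = c b a.
Definition inSign (R : realType) (lam : nat) (c : coefs R) : Prop :=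
  inA lam c /\ forall a b, c a b = - c b a.

Definition Mz1 (R : realType) (c : coefs R) : coefs R :=
  fun a b => if a is a'.+1 then c a' b else 0.
Definition Mz2 (R : realType) (c : coefs R) : coefs R :=
  fun a b => if b is b'.+1 then c a b' else 0.
Definition Ms1 (R : realType) (c : coefs R) : coefs R :=
  fun a b => Mz1 c a b + Mz2 c a b.
Definition Ms2 (R : realType) (c : coefs R) : coefs R := Mz1 (Mz2 c).

Definition bounded_linear_op (R : realType) (lam : nat)
    (P Q : coefs R -> Prop) (X : coefs R -> coefs R) : Prop :=
  (forall f, P f -> Q (X f)) /\
  (forall f g, P f -> P g -> X (fun a b => f a b + g a b) =
                              (fun a b => X f a b + X g a b)) /\
  (forall (k : R[i]) f, P f -> X (fun a b => k * f a b) = (fun a b => k * X f a b)) /\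
  (exists K : R, 0 <= K /\
     forall f M, P f -> normsq_le lam f M -> normsq_le lam (X f) (K * M)).

From HB Require Import structures.
From mathcomp Require Import all_boot all_order all_algebra.
From mathcomp Require Import complex.
From mathcomp Require Import reals.
From mathcomp Require Import ring lra zify.
From Stdlib Require Import FunctionalExtensionality.
Set Implicit Arguments. Unset Strict Implicit. Unset Printing Implicit Defensive.
Import Order.TTheory GRing.Theory Num.Theory.
Local Open Scope ring_scope.

(* Let X be a similarity from the symmetric to the antisymmetric subspace intertwining
   M_{s1}, M_{s2}, with inverse Y.  The antisymmetric functions q_n = z1^n - z2^n obey
   q_{n+2} = s1 q_{n+1} - s2 q_n, hence so do the symmetric G_n = Y q_n.  This recurrence
   forces every coefficient of G_n on the antidiagonal a + b = n - 1 to equal c = G_1(0,0).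
   Moreover c <> 0: a symmetric function vanishing at 0 is s1 A + s2 B with A, B symmetric,
   and X maps it to s1 X A + s2 X B, whose z1-coefficient X A(0,0) vanishes by
   antisymmetry, whereas X G_1 = z1 - z2.  For lam in {1, 2} the antidiagonal alone gives
   ||G_n||^2 >= |c|^2 ||z1^n||^2 (1 + 1/2 + ... + 1/n), while
   ||G_n||^2 <= ||Y||^2 ||q_n||^2 <= 4 ||Y||^2 ||z1^n||^2, contradicting the divergence
   of the harmonic series. *)

Lemma intertwiner_inverse (A B : Type) (P : A -> Prop) (Q : B -> Prop)
    (X : A -> B) (Y : B -> A) (S : A -> A) (T : B -> B) :
  (forall g, Q g -> P (Y g)) -> (forall f, P f -> P (S f)) ->
  (forall f, P f -> Y (X f) = f) -> (forall g, Q g -> X (Y g) = g) ->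
  (forall f, P f -> X (S f) = T (X f)) ->
  forall g, Q g -> Y (T g) = S (Y g).
Proof.
move=> YQP SP YX XY XS g Qg.
have PYg := YQP g Qg.
by rewrite -{1}(XY g Qg) -XS // YX //; apply: SP.
Qed.

Section SquaredModulus.
Variable R : realType.
Implicit Types x y : R[i].

Lemma sqmod_ge0 x : 0 <= sqmod x.
Proof. by rewrite /sqmod addr_ge0 ?sqr_ge0. Qed.

Lemma sqmod_gt0 x : x != 0 -> 0 < sqmod x.
Proof.
case: x => a b nz; rewrite lt_def sqmod_ge0 andbT.
apply: contraNN nz; rewrite /sqmod /= paddr_eq0 ?sqr_ge0 // !sqrf_eq0.
by case/andP => /eqP -> /eqP ->.
Qed.

Lemma sqmod0 : sqmod (0 : R[i]) = 0.
Proof. by rewrite /sqmod /= expr0n addr0. Qed.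

Lemma sqmod1 : sqmod (1 : R[i]) = 1.
Proof. by rewrite /sqmod /= expr1n expr0n addr0. Qed.

Lemma sqmodN x : sqmod (- x) = sqmod x.
Proof. by case: x => a b; rewrite /sqmod /= !sqrrN. Qed.

Lemma sqmodM x y : sqmod (x * y) = sqmod x * sqmod y.
Proof. by case: x => a b; case: y => c d; rewrite /sqmod /=; ring. Qed.

Lemma sqmodD_le x y : sqmod (x + y) <= 2 * sqmod x + 2 * sqmod y.
Proof.
case: x => a b; case: y => c d; rewrite /sqmod /=.
have := sqr_ge0 (a - c); have := sqr_ge0 (b - d); nra.
Qed.

End SquaredModulus.

Section Weights.
Variables (R : realType) (lam : nat).

Lemma wt_sym a b : wt R lam a b = wt R lam b a.
Proof. by rewrite /wt mulnC. Qed.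

Hypothesis lam_gt0 : (0 < lam)%N.

Let binom a := 'C(a + lam - 1, a).

Let binom_gt0 a : (0 < binom a)%N.
Proof. by rewrite bin_gt0; lia. Qed.

Let binomS a : binom a.+1 = 'C((a + lam - 1).+1, a.+1).
Proof. by rewrite /binom; congr 'C(_, _); lia. Qed.

Let binom_leS a : (binom a <= binom a.+1)%N.
Proof. by rewrite binomS binS leq_addl. Qed.

(* [(n+1) C(n, a) = (a+1) C(n+1, a+1)] with [n = a + lam - 1]. *)
Let binomS_le a : (binom a.+1 <= lam * binom a)%N.
Proof.
rewrite -(leq_pmul2l (ltn0Sn a)) binomS -mul_bin_diag /= mulnA leq_mul2r.
by apply/orP; right; nia.
Qed.

Let wtE a b : wt R lam a b = ((binom a * binom b)%:R)^-1.
Proof. by []. Qed.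

Lemma wt_gt0 a b : 0 < wt R lam a b.
Proof. by rewrite wtE invr_gt0 ltr0n muln_gt0 !binom_gt0. Qed.

Lemma wt_ge0 a b : 0 <= wt R lam a b.
Proof. exact/ltW/wt_gt0. Qed.

Lemma wtS1_le a b : wt R lam a.+1 b <= wt R lam a b.
Proof.
rewrite !wtE lef_pV2 ?posrE ?ltr0n ?muln_gt0 ?binom_gt0 //.
by rewrite ler_nat leq_mul2r binom_leS orbT.
Qed.

Lemma wt_le_wtS1 a b : wt R lam a b <= lam%:R * wt R lam a.+1 b.
Proof.
have pos c : (0 : R) < (binom c * binom b)%:R by rewrite ltr0n muln_gt0 !binom_gt0.
rewrite !wtE ler_pdivlMr // mulrC ler_pdivrMr // -natrM ler_nat mulnA leq_mul2r.
by rewrite binomS_le orbT.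
Qed.

End Weights.

Lemma wt1E (R : realType) a b : wt R 1 a b = 1.
Proof. by rewrite /wt !addnK !binn invr1. Qed.

Lemma wt2E (R : realType) a b : wt R 2 a b = ((a.+1 * b.+1)%N%:R)^-1.
Proof. by rewrite /wt !addn2 !subn1 /= !binSn. Qed.

(* This is the only place where [lam <= 2] matters. *)
Lemma wt_antidiag (R : realType) lam a b : lam = 1%N \/ lam = 2%N ->
  wt R lam (a + b).+1 0 / a.+1%:R <= wt R lam a b.
Proof.
case=> ->; first by rewrite !wt1E mul1r invr_le1 ?ler1n ?unitfE ?pnatr_eq0.
rewrite !wt2E -invfM lef_pV2 ?posrE -?natrM ?ltr0n ?muln_gt0 // ler_nat; nia.
Qed.

Section Harmonic.
Variable R : realType.

Definition harmonic n : R := \sum_(i < n) (i.+1%:R)^-1.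

Lemma harmonic_pow2 k : k%:R / 2 <= harmonic (2 ^ k).
Proof.
elim: k => [|k IHk]; first by rewrite mul0r /harmonic expn0 big_ord1 invr1.
have natE n : harmonic n = \sum_(0 <= i < n) (i.+1%:R)^-1 by rewrite big_mkord.
rewrite natE in IHk; rewrite natE (@big_cat_nat _ _ _ (2 ^ k)) //= ?leq_pexp2l //.
have block : 1 / 2 <= \sum_(2 ^ k <= i < 2 ^ k.+1) (i.+1%:R)^-1 :> R.
  apply: (@le_trans _ _ (\sum_(2 ^ k <= i < 2 ^ k.+1) ((2 ^ k.+1)%:R)^-1)); last first.
    rewrite big_nat_cond [X in _ <= X]big_nat_cond; apply: ler_sum => i /andP[/andP[_ hi] _].
    by rewrite lef_pV2 ?posrE ?ltr0n ?expn_gt0 // ler_nat.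
  rewrite sumr_const_nat (_ : 2 ^ k.+1 - 2 ^ k = 2 ^ k)%N; last first.
    by rewrite expnS mul2n -addnn addnK.
  have pk : (2 ^ k)%:R != 0 :> R by rewrite pnatr_eq0 expn_eq0.
  by rewrite -[X in _ <= X]mulr_natl expnS natrM invfM mulrCA mulfV // mulr1 div1r.
rewrite -natr1; lra.
Qed.

Lemma harmonic_unbounded (M : R) : exists n, M < harmonic n.
Proof.
have M0 : 0 <= Num.max 0 M by rewrite le_max lexx.
set B := Num.Def.archi_bound (Num.max 0 M).
exists (2 ^ (2 * B))%N; apply: lt_le_trans (harmonic_pow2 _).
rewrite natrM mulrC mulrA mulVf ?pnatr_eq0 // mul1r.
by apply: le_lt_trans (archi_boundP M0); rewrite le_max lexx orbT.
Qed.

End Harmonic.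

Section CoefficientOperations.
Variable R : realType.
Implicit Types c d : coefs R.

Definition swapc c : coefs R := fun a b => c b a.

Definition bshift1 c : coefs R := fun a b => c a.+1 b.
Definition bshift2 c : coefs R := fun a b => c a b.+1.

Definition monomial (i j : nat) : coefs R := fun a b => if (a == i) && (b == j) then 1 else 0.

Definition powdiff (n : nat) : coefs R := fun a b => monomial n 0 a b - monomial 0 n a b.

Lemma Mz2_swap c : Mz2 c = swapc (Mz1 (swapc c)).
Proof. by apply: functional_extensionality => a; apply: functional_extensionality => -[]. Qed.

Lemma bshift2_swap c : bshift2 c = swapc (bshift1 (swapc c)).
Proof. by []. Qed.

Lemma Ms2_bshift c : (forall a, c a 0%N = 0) -> (forall b, c 0%N b = 0) ->
  Ms2 (bshift1 (bshift2 c)) = c.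
Proof.
move=> c_a0 c_0b; apply: functional_extensionality => -[|a].
  by apply: functional_extensionality => b; rewrite c_0b.
by apply: functional_extensionality => -[|b] //; rewrite c_a0.
Qed.

Definition lucas_rec (G : nat -> coefs R) :=
  forall n a b, G n.+2 a b = Ms1 (G n.+1) a b - Ms2 (G n) a b.

Lemma powdiff_lucas : lucas_rec powdiff.
Proof.
move=> n [|a] [|b]; rewrite /powdiff /Ms1 /Ms2 /Mz1 /Mz2 /monomial /= ?eqSS ?andbT ?andbF /=.
all: ring.
Qed.

(* No condition on [G 0] is needed: it only reaches coefficients of degree [>= n] in [G n]. *)
Lemma lucas_coef G : lucas_rec G -> forall n a b,
  (((a + b).+1 < n)%N -> G n a b = 0) /\ ((a + b).+1 = n -> G n a b = G 1%N 0%N 0%N).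
Proof.
move=> hG.
pose P n := forall a b,
  (((a + b).+1 < n)%N -> G n a b = 0) /\ ((a + b).+1 = n -> G n a b = G 1%N 0%N 0%N).
suff PS : forall n, P n /\ P n.+1 by move=> n; case: (PS n).
elim=> [|n [IHn IHn1]].
  split=> a b; split=> h; try lia.
  by have [-> ->] : a = 0%N /\ b = 0%N by lia.
split=> // a b; rewrite hG /Ms1 /Ms2 /Mz1 /Mz2.
case: a => [|a]; case: b => [|b] /=; rewrite ?addr0 ?add0r ?subr0 ?oppr0.
- by split=> h; [|lia].
- by have [H1 H2] := IHn1 0%N b; split=> h; [apply: H1|apply: H2]; lia.
- by have [H1 H2] := IHn1 a 0%N; split=> h; [apply: H1|apply: H2]; rewrite ?addn0 //; lia.
- have [H1 H2] := IHn1 a b.+1; have [H3 H4] := IHn1 a.+1 b; have [H5 H6] := IHn a b.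
  split=> h; first by rewrite H1 ?H3 ?H5 ?subr0 ?addr0 //; lia.
  rewrite H2 ?H4 ?H6; try lia; ring.
Qed.

End CoefficientOperations.

Arguments monomial {R}.
Arguments powdiff {R}.

Lemma sum_ord_supp1 (R : realType) (F : nat -> R) j n :
  (forall a, a != j -> F a = 0) -> \sum_(a < n) F a = if (j < n)%N then F j else 0.
Proof.
move=> F0; rewrite -(big_ord1_eq +%R F) [RHS]big_mkcond /=; apply: eq_bigr => a _.
by case: eqP => // /eqP /F0.
Qed.

Section SquareSummable.
Variables (R : realType) (lam : nat).
Hypothesis lam_gt0 : (0 < lam)%N.
Implicit Types (c d : coefs R) (K M : R).

Definition rsum c n m : R := \sum_(a < n) \sum_(b < m) wt R lam a b * sqmod (c a b).

Let term_ge0 c a b : 0 <= wt R lam a b * sqmod (c a b).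
Proof. by rewrite mulr_ge0 ?wt_ge0 ?sqmod_ge0. Qed.
#[local] Hint Resolve term_ge0 : core.

Lemma rsumSl c n m : rsum c n m <= rsum c n.+1 m.
Proof. by rewrite /rsum big_ord_recr lerDl sumr_ge0. Qed.

Lemma rsumSr c n m : rsum c n m <= rsum c n m.+1.
Proof. by rewrite /rsum; apply: ler_sum => a _; rewrite big_ord_recr lerDl. Qed.

Lemma rsum_swap c n m : rsum (swapc c) n m = rsum c m n.
Proof.
rewrite /rsum exchange_big; apply: eq_bigr => b _; apply: eq_bigr => a _.
by rewrite wt_sym.
Qed.

Lemma rsum_Mz1 c n m : rsum (Mz1 c) n m <= rsum c n m.
Proof.
case: n => [|n]; first by rewrite /rsum !big_ord0.
rewrite {1}/rsum big_ord_recl big1 ?add0r => [|b _]; last by rewrite sqmod0 mulr0.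
apply: le_trans (rsumSl c n m); apply: ler_sum => a _; apply: ler_sum => b _.
by rewrite lift0 ler_wpM2r ?sqmod_ge0 ?wtS1_le.
Qed.

Lemma rsum_Mz2 c n m : rsum (Mz2 c) n m <= rsum c n m.
Proof. by rewrite Mz2_swap rsum_swap -[rsum c n m]rsum_swap rsum_Mz1. Qed.

Lemma rsum_bshift1 c n m : rsum (bshift1 c) n m <= lam%:R * rsum c n.+1 m.
Proof.
rewrite [rsum c _ _]/rsum big_ord_recl mulrDr ler_wpDl ?mulr_ge0 ?sumr_ge0 //.
rewrite mulr_sumr; apply: ler_sum => a _; rewrite mulr_sumr; apply: ler_sum => b _.
by rewrite lift0 mulrA ler_wpM2r ?sqmod_ge0 ?wt_le_wtS1.
Qed.

Lemma rsum_bshift2 c n m : rsum (bshift2 c) n m <= lam%:R * rsum c n m.+1.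
Proof. by rewrite bshift2_swap rsum_swap -[rsum c _ _]rsum_swap rsum_bshift1. Qed.

Lemma normsq_le_dom c d K M : 0 <= K ->
    (forall a b, sqmod (d a b) <= K * sqmod (c a b)) ->
  normsq_le lam c M -> normsq_le lam d (K * M).
Proof.
move=> K0 dom cM N; apply: le_trans (ler_wpM2l K0 (cM N)).
rewrite /psum mulr_sumr; apply: ler_sum => a _; rewrite mulr_sumr; apply: ler_sum => b _.
by rewrite mulrCA ler_wpM2l ?wt_ge0.
Qed.

Lemma normsq_le_add c d M M' : normsq_le lam c M -> normsq_le lam d M' ->
  normsq_le lam (fun a b => c a b + d a b) (2 * M + 2 * M').
Proof.
move=> cM dM' N; apply: le_trans (lerD (ler_wpM2l _ (cM N)) (ler_wpM2l _ (dM' N))) => //.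
rewrite /psum !mulr_sumr -big_split; apply: ler_sum => a _.
rewrite !mulr_sumr -big_split; apply: ler_sum => b _ /=.
by rewrite mulrCA [2 * (_ * _)]mulrCA -mulrDr ler_wpM2l ?wt_ge0 ?sqmodD_le.
Qed.

Lemma normsq_le_Mz1 c M : normsq_le lam c M -> normsq_le lam (Mz1 c) M.
Proof. by move=> cM N; apply: le_trans (rsum_Mz1 c N N) (cM N). Qed.

Lemma normsq_le_Mz2 c M : normsq_le lam c M -> normsq_le lam (Mz2 c) M.
Proof. by move=> cM N; apply: le_trans (rsum_Mz2 c N N) (cM N). Qed.

Lemma normsq_le_bshift1 c M : normsq_le lam c M -> normsq_le lam (bshift1 c) (lam%:R * M).
Proof.
move=> cM N; apply: le_trans (rsum_bshift1 c N N) _; rewrite ler_wpM2l //.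
exact: le_trans (rsumSr c N.+1 N) (cM N.+1).
Qed.

Lemma normsq_le_bshift2 c M : normsq_le lam c M -> normsq_le lam (bshift2 c) (lam%:R * M).
Proof.
move=> cM N; apply: le_trans (rsum_bshift2 c N N) _; rewrite ler_wpM2l //.
exact: le_trans (rsumSl c N N.+1) (cM N.+1).
Qed.

Lemma normsq_le_monomial i j : normsq_le lam (monomial i j) (wt R lam i j).
Proof.
move=> N; pose row a := \sum_(b < N) wt R lam a b * sqmod (monomial i j a b).
rewrite /psum -/row (@sum_ord_supp1 _ row i) => [|a ai]; last first.
  by apply: big1 => b _; rewrite /monomial (negbTE ai) sqmod0 mulr0.
rewrite /row (@sum_ord_supp1 _ (fun b => wt R lam i b * sqmod (monomial i j i b)) j).
  by rewrite /monomial !eqxx sqmod1 mulr1; case: ifP => _; [case: ifP|]; rewrite ?wt_ge0.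
by move=> b bj; rewrite /monomial (negbTE bj) andbF sqmod0 mulr0.
Qed.

Lemma normsq_le_powdiff n : normsq_le lam (powdiff n) (4 * wt R lam n 0).
Proof.
have neg : normsq_le lam (fun a b => - monomial 0 n a b) (1 * wt R lam 0 n).
  by apply: normsq_le_dom (normsq_le_monomial 0 n) => // a b; rewrite sqmodN mul1r.
move=> N; apply: le_trans (normsq_le_add (normsq_le_monomial n 0) neg N) _.
by rewrite mul1r [wt _ _ 0 n]wt_sym; lra.
Qed.

Lemma antidiag_le_psum c m :
  \sum_(a < m.+1) wt R lam a (m - a) * sqmod (c a (m - a)%N) <= psum lam c m.+1.
Proof.
apply: ler_sum => a _; have am : (m - a < m.+1)%N by rewrite ltnS leq_subr.
by rewrite (bigD1 (Ordinal am)) //= lerDl sumr_ge0.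
Qed.

End SquareSummable.

Section Subspaces.
Variables (R : realType) (lam : nat).
Hypothesis lam_gt0 : (0 < lam)%N.
Implicit Types (c d : coefs R) (k : R[i]).

Lemma inA_dom c d (K : R) : 0 <= K ->
  (forall a b, sqmod (d a b) <= K * sqmod (c a b)) -> inA lam c -> inA lam d.
Proof. by move=> K0 dom [M cM]; exists (K * M); apply: normsq_le_dom cM. Qed.

Lemma inA_add c d : inA lam c -> inA lam d -> inA lam (fun a b => c a b + d a b).
Proof. by move=> [M cM] [M' dM']; exists (2 * M + 2 * M'); apply: normsq_le_add. Qed.

Lemma inA_scale k c : inA lam c -> inA lam (fun a b => k * c a b).
Proof. by apply: inA_dom (sqmod_ge0 k) _ => a b; rewrite sqmodM. Qed.

Lemma inA_mask (P : nat -> nat -> bool) c :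
  inA lam c -> inA lam (fun a b => if P a b then c a b else 0).
Proof.
apply: inA_dom ler01 _ => a b; rewrite mul1r.
by case: (P a b); rewrite ?sqmod0 ?sqmod_ge0.
Qed.

Lemma inA_Mz1 c : inA lam c -> inA lam (Mz1 c).
Proof. by move=> [M cM]; exists M; apply: normsq_le_Mz1. Qed.

Lemma inA_Mz2 c : inA lam c -> inA lam (Mz2 c).
Proof. by move=> [M cM]; exists M; apply: normsq_le_Mz2. Qed.

Lemma inA_bshift1 c : inA lam c -> inA lam (bshift1 c).
Proof. by move=> [M cM]; exists (lam%:R * M); apply: normsq_le_bshift1. Qed.

Lemma inA_bshift2 c : inA lam c -> inA lam (bshift2 c).
Proof. by move=> [M cM]; exists (lam%:R * M); apply: normsq_le_bshift2. Qed.

Lemma triv_add c d : inTriv lam c -> inTriv lam d -> inTriv lam (fun a b => c a b + d a b).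
Proof. by move=> [cA cs] [dA ds]; split=> [|a b]; [apply: inA_add | rewrite cs ds]. Qed.

Lemma triv_scale k c : inTriv lam c -> inTriv lam (fun a b => k * c a b).
Proof. by move=> [cA cs]; split=> [|a b]; [apply: inA_scale | rewrite cs]. Qed.

Lemma triv_opp c : inTriv lam c -> inTriv lam (fun a b => - c a b).
Proof.
move=> [cA cs]; split=> [|a b]; last by rewrite cs.
by apply: inA_dom ler01 _ cA => a b; rewrite sqmodN mul1r.
Qed.

Lemma sign_scale k c : inSign lam c -> inSign lam (fun a b => k * c a b).
Proof. by move=> [cA cs]; split=> [|a b]; [apply: inA_scale | rewrite cs mulrN]. Qed.

Lemma inA_Ms1 c : inA lam c -> inA lam (Ms1 c).
Proof. by move=> cA; apply: inA_add; [apply: inA_Mz1 | apply: inA_Mz2]. Qed.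

Lemma inA_Ms2 c : inA lam c -> inA lam (Ms2 c).
Proof. by move=> cA; apply/inA_Mz1/inA_Mz2. Qed.

Lemma triv_Ms1 c : inTriv lam c -> inTriv lam (Ms1 c).
Proof.
move=> [cA cs]; split=> [|[|a] [|b]]; first exact: inA_Ms1.
all: rewrite /Ms1 /Mz1 /Mz2 /= ?addr0 ?add0r //.
by rewrite (cs a) (cs a.+1) addrC.
Qed.

Lemma triv_Ms2 c : inTriv lam c -> inTriv lam (Ms2 c).
Proof. by move=> [cA cs]; split=> [|[|a] [|b]] //=; apply: inA_Ms2. Qed.

Lemma sign_Ms1 c : inSign lam c -> inSign lam (Ms1 c).
Proof.
move=> [cA cs]; split=> [|[|a] [|b]]; first exact: inA_Ms1.
all: rewrite /Ms1 /Mz1 /Mz2 /= ?addr0 ?add0r ?oppr0 //.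
by rewrite (cs a) (cs a.+1) opprD addrC.
Qed.

Lemma sign_Ms2 c : inSign lam c -> inSign lam (Ms2 c).
Proof.
by move=> [cA cs]; split=> [|[|a] [|b]] /=; rewrite ?oppr0 //; apply: inA_Ms2.
Qed.

Lemma sign_diag c a : inSign lam c -> c a a = 0.
Proof. by case=> _ /(_ a a) /esym/eqP; rewrite eqNr => /eqP. Qed.

Lemma triv_monomial00 : inTriv lam (monomial 0 0 : coefs R).
Proof.
split=> [|a b]; first by exists (wt R lam 0 0); apply: normsq_le_monomial.
by rewrite /monomial andbC.
Qed.

Lemma sign_powdiff n : inSign lam (powdiff n : coefs R).
Proof.
split=> [|a b]; first by exists (4 * wt R lam n 0); apply: normsq_le_powdiff.
by rewrite /powdiff opprB /monomial; congr (_ - _); rewrite andbC.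
Qed.

(* Chosen so that [D - s1 * axial_part D] vanishes on both axes, hence is divisible by [s2]. *)
Definition axial_part (D : coefs R) : coefs R := fun a b =>
  (if b == 0%N then D a.+1 b else 0) + (if (a == 0%N) && (b != 0%N) then D a b.+1 else 0).

Lemma triv_axial_part D : inTriv lam D -> inTriv lam (axial_part D).
Proof.
move=> [DA Ds]; split=> [|[|a] [|b]].
- by apply: inA_add; apply: inA_mask; [apply: inA_bshift1 | apply: inA_bshift2].
all: rewrite /axial_part /= ?addr0 ?add0r //.
all: exact: Ds.
Qed.

Lemma axial_part_axis D : D 0%N 0%N = 0 -> forall a, D a 0%N - Ms1 (axial_part D) a 0%N = 0.
Proof.
move=> D00 [|a]; rewrite /Ms1 /Mz1 /Mz2 /axial_part /=.
  by rewrite D00 !addr0 subrr.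
by rewrite andbF /= !addr0 subrr.
Qed.

Lemma triv_ideal_decomp D : inTriv lam D -> D 0%N 0%N = 0 ->
  exists A B : coefs R,
    [/\ inTriv lam A, inTriv lam B & D = (fun a b => Ms1 A a b + Ms2 B a b)].
Proof.
move=> tD D00; set A := axial_part D; set E : coefs R := fun a b => D a b - Ms1 A a b.
have tA : inTriv lam A := triv_axial_part tD.
have [EA Es] : inTriv lam E.
  by rewrite /E; apply/(triv_add tD)/triv_opp/triv_Ms1.
have E_axis a : E a 0%N = 0 := axial_part_axis D00 a.
exists A, (bshift1 (bshift2 E)); split=> //.
  by split=> [|a b]; [apply/inA_bshift1/inA_bshift2 | apply: Es].
rewrite Ms2_bshift // => [|b]; last by rewrite Es.
apply: functional_extensionality => a; apply: functional_extensionality => b.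
by rewrite /E addrC subrK.
Qed.

End Subspaces.

Section NoSimilarity.
Variables (R : realType) (lam : nat).
Hypothesis lam12 : lam = 1%N \/ lam = 2%N.
Variables X Y : coefs R -> coefs R.
Hypothesis X_op : bounded_linear_op lam (inTriv lam) (inSign lam) X.
Hypothesis Y_op : bounded_linear_op lam (inSign lam) (inTriv lam) Y.
Hypothesis YX : forall f, inTriv lam f -> Y (X f) = f.
Hypothesis XY : forall g, inSign lam g -> X (Y g) = g.
Hypothesis X_Ms1 : forall f, inTriv lam f -> X (Ms1 f) = Ms1 (X f).
Hypothesis X_Ms2 : forall f, inTriv lam f -> X (Ms2 f) = Ms2 (X f).

Let lam_gt0 : (0 < lam)%N.
Proof. by case: lam12 => ->. Qed.

Let G n := Y (powdiff n).

Lemma Ypowdiff_lucas : lucas_rec G.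
Proof.
have [Ysign [Yadd [Yscale _]]] := Y_op.
have Y_Ms1 := intertwiner_inverse Ysign (triv_Ms1 lam_gt0) YX XY X_Ms1.
have Y_Ms2 := intertwiner_inverse Ysign (triv_Ms2 lam_gt0) YX XY X_Ms2.
have sq n := sign_powdiff R lam_gt0 n.
move=> n a b; have s1 := sign_Ms1 lam_gt0 (sq n.+1); have s2 := sign_Ms2 lam_gt0 (sq n).
rewrite /G; have -> : powdiff n.+2 =
    (fun a b => Ms1 (powdiff n.+1) a b + (-1) * Ms2 (powdiff n) a b) :> coefs R.
  apply: functional_extensionality => x; apply: functional_extensionality => y.
  by rewrite powdiff_lucas mulN1r.
rewrite (Yadd _ _ s1 (sign_scale lam_gt0 (-1) s2)) (Yscale _ _ s2) Y_Ms1 ?Y_Ms2 //.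
by rewrite mulN1r.
Qed.

Lemma X_coef10_ideal D : inTriv lam D -> D 0%N 0%N = 0 -> X D 1%N 0%N = 0.
Proof.
have [Xsign [Xadd _]] := X_op.
move=> tD D00; have [A [B [tA tB ->]]] := triv_ideal_decomp lam_gt0 tD D00.
rewrite (Xadd _ _ (triv_Ms1 lam_gt0 tA) (triv_Ms2 lam_gt0 tB)) X_Ms1 // X_Ms2 //.
by rewrite /Ms1 /Ms2 /Mz1 /Mz2 /= !addr0 (sign_diag 0 (Xsign _ tA)).
Qed.

Lemma Ypowdiff1_coef00_neq0 : G 1%N 0%N 0%N != 0.
Proof.
have [_ [Xadd [Xscale _]]] := X_op.
have t1 := triv_monomial00 R lam_gt0.
have tG1 : inTriv lam (G 1%N) by case: Y_op => Ysign _; apply/Ysign/sign_powdiff.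
pose D a b := G 1%N a b + (- G 1%N 0%N 0%N) * monomial 0 0 a b.
have tD : inTriv lam D := triv_add lam_gt0 tG1 (triv_scale lam_gt0 _ t1).
have D00 : D 0%N 0%N = 0 by rewrite /D /monomial /= mulr1 addrN.
have G1E : G 1%N = fun a b => D a b + G 1%N 0%N 0%N * monomial 0 0 a b.
  apply: functional_extensionality => a; apply: functional_extensionality => b.
  by rewrite /D mulNr addrNK.
have : powdiff 1 1%N 0%N = G 1%N 0%N 0%N * X (monomial 0 0) 1%N 0%N.
  rewrite -(XY (sign_powdiff R lam_gt0 1)) -[Y (powdiff 1)]/(G 1%N) {1}G1E.
  by rewrite (Xadd _ _ tD (triv_scale lam_gt0 _ t1)) (Xscale _ _ t1) X_coef10_ideal // add0r.
move=> coef10; apply/eqP => G0; move: coef10.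
by rewrite G0 mul0r /powdiff /monomial /= subr0 => /eqP; rewrite oner_eq0.
Qed.

Lemma Ypowdiff_harmonic_bound :
  exists K : R, forall n, sqmod (G 1%N 0%N 0%N) * harmonic R n <= K.
Proof.
have [_ [_ [_ [K [K0 YK]]]]] := Y_op.
exists (4 * K) => -[|m]; first by rewrite /harmonic big_ord0 mulr0 mulr_ge0.
set w := wt R lam m.+1 0.
have up : psum lam (G m.+1) m.+1 <= K * (4 * w).
  exact: YK _ _ (sign_powdiff R lam_gt0 _) (normsq_le_powdiff R lam_gt0 _) m.+1.
have low : sqmod (G 1%N 0%N 0%N) * (w * harmonic R m.+1) <= psum lam (G m.+1) m.+1.
  apply: le_trans (antidiag_le_psum lam_gt0 (G m.+1) m).
  rewrite /harmonic !mulr_sumr; apply: ler_sum => a _.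
  have am : (a + (m - a) = m)%N by rewrite subnKC // -ltnS.
  have [_ ->] := lucas_coef Ypowdiff_lucas m.+1 a (m - a); last by rewrite am.
  rewrite [X in _ <= X]mulrC ler_wpM2l ?sqmod_ge0 // /w -{1}am.
  exact: wt_antidiag.
have e : K * (4 * w) = w * (4 * K) by ring.
by rewrite -(ler_pM2l (wt_gt0 R lam_gt0 m.+1 0)) -/w mulrCA -e (le_trans low up).
Qed.

Lemma no_similarity : False.
Proof.
have [K GK] := Ypowdiff_harmonic_bound.
have s_gt0 := sqmod_gt0 Ypowdiff1_coef00_neq0.
have [n Hn] := harmonic_unbounded (K / sqmod (G 1%N 0%N 0%N)).
by move: (GK n); rewrite -ler_pdivlMl // mulrC => /(lt_le_trans Hn); rewrite ltxx.
Qed.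

End NoSimilarity.

Theorem theorem4p24 (R : realType) (lam : nat) (hlam : lam = 1%N \/ lam = 2%N) :
  ~ exists X : coefs R -> coefs R,
      bounded_linear_op lam (inTriv lam) (inSign lam) X /\
      (exists Y : coefs R -> coefs R,
          bounded_linear_op lam (inSign lam) (inTriv lam) Y /\
          (forall f, inTriv lam f -> Y (X f) = f) /\
          (forall g, inSign lam g -> X (Y g) = g)) /\
      (forall f, inTriv lam f -> X (Ms1 f) = Ms1 (X f)) /\
      (forall f, inTriv lam f -> X (Ms2 f) = Ms2 (X f)).
Proof.
move=> [X [X_op [[Y [Y_op [YX XY]]] [X_Ms1 X_Ms2]]]].
exact: (no_similarity hlam X_op Y_op YX XY X_Ms1 X_Ms2).
Qed.
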